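(* Let $\mathcal{X}$ be an $n$-premaniplex and $(\mathcal{Y},\eta)$ an $(n,m)$-voltage operator. Let $\tau\in\operatorname{Aut}(\mathcal{Y})$ be such that there exists a group homomorphism $\tau^\#:\mathcal{C}^n\to\mathcal{C}^n$ with $\tau^\#(\eta(W))=\eta(W\tau)$ for every $W\in\Pi(\mathcal{Y})$, and suppose that $\mathcal{X}^{\tau^\#}$ is isomorphic to $\mathcal{X}$. Then $\tau$ lifts to $\mathcal{X}\rtimes_\eta\mathcal{Y}$.
   Context: An $n$-premaniplex is an edge-coloured graph (semi-edges and parallel edges allowed) with colours $\{0,\dots,n-1\}$ such that every vertex (flag) is the start of exactly one dart of each colour, and for $|i-j|\ge2$ alternating $i,j$-paths of length 4 are closed; $x^i$ is the $i$-adjacent flag of $x$. $\mathcal{C}^n=\langle r_0,\dots,r_{n-1}\mid r_i^2,\ (r_ir_j)^2\ (|i-j|\ge2)\rangle$ acts on the left on flags by $r_ix=x^i$. Isomorphisms are bijections on flags preserving all adjacencies; automorphisms act on the right and map paths to paths, $W\mapsto W\tau$. For a flag $y$ of an $m$-premaniplex $\mathcal{Y}$ and $\omega\in\mathcal{C}^m$, $W_\omega(y)$ is the homotopy class of paths from $y$ whose colour sequence $i_1,\dots,i_k$ satisfies $r_{i_k}\cdots r_{i_1}=\omega$; these form the fundamental groupoid $\Pi(\mathcal{Y})$. A voltage assignment $\eta:\Pi(\mathcal{Y})\to\mathcal{C}^n$ satisfies $\eta(W_1W_2)=\eta(W_2)\eta(W_1)$; $(\mathcal{Y},\eta)$ is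 an $(n,m)$-voltage operator. $\mathcal{X}\rtimes_\eta\mathcal{Y}$ has flags $\mathcal{X}\times\mathcal{Y}$ and $(x,y)^i=(\eta(W_{r_i}(y))x,r_iy)$, $i\in\{0,\dots,m-1\}$. $\mathcal{X}^{\tau^\#}$ is the $n$-premaniplex with the flags of $\mathcal{X}$ in which the $i$-adjacent flag of $x$ is $\tau^\#(r_i)x$. $\tau\in\operatorname{Aut}(\mathcal{Y})$ lifts to $\mathcal{X}\rtimes_\eta\mathcal{Y}$ if there is $\tilde\tau\in\operatorname{Aut}(\mathcal{X}\rtimes_\eta\mathcal{Y})$ such that the $\mathcal{Y}$-coordinate of $(x,y)\tilde\tau$ is $y\tau$ for all $(x,y)$. *)

From mathcomp Require Import all_boot.
From Stdlib Require Import Relations.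
Set Implicit Arguments. Unset Strict Implicit. Unset Printing Implicit Defensive.

Definition far (n : nat) (i j : 'I_n) : bool := (i.+1 < j) || (j.+1 < i).

(* ---------- The universal Coxeter group C^n, as words modulo relations ----
   A word [:: a1; ...; ak] denotes the element r_{a1} r_{a2} ... r_{ak};
   concatenation is the group product. *)
Definition word (n : nat) := seq 'I_n.

Inductive cox_step (n : nat) : word n -> word n -> Prop :=
| cox_sq (u v : word n) (i : 'I_n) : cox_step (u ++ [:: i; i] ++ v) (u ++ v)
| cox_comm (u v : word n) (i j : 'I_n) :
    far i j -> cox_step (u ++ [:: i; j; i; j] ++ v) (u ++ v).

Definition cox_eq (n : nat) : relation (word n) :=
  clos_refl_sym_trans (word n) (@cox_step n).

Definition cox_hom (n : nat) (h : word n -> word n) : Prop :=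
  (forall u v, cox_eq u v -> cox_eq (h u) (h v)) /\
  (forall u v, cox_eq (h (u ++ v)) (h u ++ h v)).

(* adj i x = x^i : exactly one i-dart at each flag, so i-adjacency is an
   involution (fixed points = semi-edges); alternating i,j-paths of length 4
   are closed for |i-j| >= 2. *)
Record premaniplex (n : nat) := Premaniplex {
  flag :> Type;
  adj : 'I_n -> flag -> flag;
  adjK : forall i x, adj i (adj i x) = x;
  adj_far : forall i j x, far i j -> adj j (adj i (adj j (adj i x))) = x
}.

Arguments adj {n} p i x.

(* left action of words: act [:: a1; ...; ak] x = r_{a1} (... (r_{ak} x)) *)
Definition act (n : nat) (F : Type) (a : 'I_n -> F -> F) (w : word n) (x : F)
  : F := foldr (fun i z => a i z) x w.

Definition is_iso (k : nat) (F G : Type) (a : 'I_k -> F -> F)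
  (b : 'I_k -> G -> G) (f : F -> G) : Prop :=
  bijective f /\ forall i x, f (a i x) = b i (f x).

Definition is_aut (k : nat) (Y : premaniplex k) (f : Y -> Y) : Prop :=
  is_iso (adj Y) (adj Y) f.

(* The fundamental groupoid: the class W_omega(y) is the pair (y, omega),
   omega in C^m (a word); it ends at omega y.  eta y omega = eta(W_omega(y)).
   Concatenation W_omega(y) W_nu(omega y) = W_{nu omega}(y), and
   eta(W1 W2) = eta(W2) eta(W1). *)
Definition voltage (n m : nat) (Y : premaniplex m)
  (eta : Y -> word m -> word n) : Prop :=
  (forall y w w', cox_eq w w' -> cox_eq (eta y w) (eta y w')) /\
  (forall y (om nu : word m),
      cox_eq (eta y (nu ++ om)) (eta (act (adj Y) om y) nu ++ eta y om)).

(* adjacency of X ⋊_eta Y : (x,y)^i = (eta(W_{r_i}(y)) x, r_i y) *)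
Definition vprod_adj (n m : nat) (X : premaniplex n) (Y : premaniplex m)
  (eta : Y -> word m -> word n) (i : 'I_m) (p : X * Y) : X * Y :=
  (act (adj X) (eta p.2 [:: i]) p.1, adj Y i p.2).

(* adjacency of X^{tau#} : the i-adjacent flag of x is tau#(r_i) x *)
Definition twist_adj (n : nat) (X : premaniplex n) (h : word n -> word n)
  (i : 'I_n) (x : X) : X := act (adj X) (h [:: i]) x.

(* An isomorphism psi : X -> X^{tau#} satisfies psi (w x) = tau#(w) (psi x) for
   every word w, so (x, y) |-> (psi x, y tau) carries the i-adjacency
   (eta(W_{r_i}(y)) x, r_i y) to (tau#(eta(W_{r_i}(y))) psi x, r_i (y tau)),
   which is the i-adjacency at (psi x, y tau) because
   tau#(eta(W_{r_i}(y))) = eta(W_{r_i}(y tau)) in C^n. *)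
From mathcomp Require Import all_boot.
Set Implicit Arguments. Unset Strict Implicit.

Lemma act_cat (n : nat) (F : Type) (a : 'I_n -> F -> F) (u v : word n) (x : F) :
  act a (u ++ v) x = act a u (act a v x).
Proof. by rewrite /act foldr_cat. Qed.

Lemma far_sym (n : nat) (i j : 'I_n) : far i j -> far j i.
Proof. by rewrite /far orbC. Qed.

Lemma iso_act (k : nat) (F G : Type) (a : 'I_k -> F -> F) (b : 'I_k -> G -> G)
    (f : F -> G) :
  (forall i x, f (a i x) = b i (f x)) ->
  forall w x, f (act a w x) = act b w (f x).
Proof. by move=> fa; elim=> [|i w IHw] x //=; rewrite fa IHw. Qed.

Lemma iso_inv (k : nat) (F G : Type) (a : 'I_k -> F -> F) (b : 'I_k -> G -> G)
    (f : F -> G) (g : G -> F) :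
  cancel f g -> cancel g f ->
  (forall i x, f (a i x) = b i (f x)) -> forall i y, g (b i y) = a i (g y).
Proof. by move=> fK gK fa i y; apply: (can_inj fK); rewrite fa !gK. Qed.

Section CoxeterAction.

Variables (n : nat) (X : premaniplex n).

Lemma act_cox_eq (u v : word n) : cox_eq u v -> act (adj X) u =1 act (adj X) v.
Proof.
elim=> {u v} [u v [p q i | p q i j ij] | u | u v _ IH | u v w _ IH1 _ IH2] x //.
- by rewrite !act_cat /= adjK.
- by rewrite !act_cat /= adj_far // far_sym.
- by rewrite IH1 IH2.
Qed.

Lemma act_revK (w : word n) : cancel (act (adj X) w) (act (adj X) (rev w)).
Proof.
by elim: w => [|i w IHw] x //=; rewrite rev_cons -cats1 act_cat /= adjK IHw.
Qed.

Variable h : word n -> word n.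
Hypothesis h_hom : cox_hom h.

Lemma cox_hom_act_nil : act (adj X) (h [::]) =1 id.
Proof.
move=> x; have /(_ x) := act_cox_eq (proj2 h_hom [::] [::]).
rewrite act_cat => /(f_equal (act (adj X) (rev (h [::])))).
by rewrite !act_revK => <-.
Qed.

Lemma act_twist_adj (w : word n) : act (twist_adj h) w =1 act (adj X) (h w).
Proof.
elim: w => [|i w IHw] x /=; first by rewrite cox_hom_act_nil.
have /= -> := act_cox_eq (proj2 h_hom [:: i] w) x.
by rewrite act_cat IHw.
Qed.

End CoxeterAction.

Section Lift.

Variables (n m : nat) (X : premaniplex n) (Y : premaniplex m).
Variables (eta : Y -> word m -> word n) (tau : Y -> Y) (tauh : word n -> word n).
Hypothesis tauh_hom : cox_hom tauh.
Hypothesis tauh_eta : forall y om, cox_eq (tauh (eta y om)) (eta (tau y) om).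
Hypothesis tau_adj : forall i y, tau (adj Y i y) = adj Y i (tau y).

Definition lift (psi : X -> X) (p : X * Y) : X * Y := (psi p.1, tau p.2).

Lemma lift_vprod_adj (psi : X -> X) :
  (forall i x, psi (adj X i x) = twist_adj tauh i (psi x)) ->
  forall i p, lift psi (vprod_adj eta i p) = vprod_adj eta i (lift psi p).
Proof.
move=> psi_adj i [x y]; rewrite /lift /vprod_adj /= tau_adj.
rewrite (iso_act psi_adj) act_twist_adj //.
by rewrite (act_cox_eq (tauh_eta y [:: i])).
Qed.

End Lift.

Lemma bijective_pair (A B : Type) (f : A -> A) (g : B -> B) :
  bijective f -> bijective g -> bijective (fun p : A * B => (f p.1, g p.2)).
Proof.
move=> [f' fK f'K] [g' gK g'K].
by exists (fun p => (f' p.1, g' p.2)) => [] [x y] /=; rewrite ?fK ?gK ?f'K ?g'K.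
Qed.

Theorem proposition6p4 (n m : nat) (X : premaniplex n) (Y : premaniplex m)
  (eta : Y -> word m -> word n) (tau : Y -> Y) (tauh : word n -> word n) :
  voltage eta ->
  is_aut tau ->
  cox_hom tauh ->
  (forall (y : Y) (om : word m), cox_eq (tauh (eta y om)) (eta (tau y) om)) ->
  (exists phi : X -> X, is_iso (twist_adj tauh) (adj X) phi) ->
  exists ttau : X * Y -> X * Y,
    is_iso (vprod_adj eta) (vprod_adj eta) ttau /\
    forall p, (ttau p).2 = tau p.2.
Proof.
(* Only the voltages of the one-step paths W_{r_i}(y) enter the adjacency. *)
move=> _ [tau_bij tau_adj] tauh_hom tauh_eta [phi [[psi phiK psiK] phi_adj]].
have psi_adj := iso_inv phiK psiK phi_adj.
exists (lift tau psi); split=> //; split.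
- by apply: bijective_pair => //; exists phi.
- exact: (lift_vprod_adj tauh_hom tauh_eta tau_adj psi_adj).
Qed.
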